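(* Let $(N,M,W,C,P,\infty)$ be an MRS-situation with unbounded production and $(N,M,v)$ the corresponding MRS-game. Then the set $M^o$ of optimal suppliers satisfies $|M^o|\ge 1$.
   Context: An MRS-situation $(N,M,W,C,P,\overline{Q})$ consists of a finite set $N$ of retailers and a finite set $M$ of suppliers (distinct agents), and: for each $j\in M$ a unit production cost $c_j:[0,\infty)\to(0,\infty)$, decreasing and continuous with $c_j(q)q$ nondecreasing, and a wholesale price $w_j:[0,\infty)\to(0,\infty)$, nonincreasing and continuous, with $w_j(q)>c_j(q)$ for all $q\ge0$ and $w_j(q)q$ nondecreasing; for each $i\in N$ a selling price $p_i:[0,\infty)\to\mathbb{R}$, nonincreasing and continuous, with $p_i(0)>w_j(0)$ for all $j$, and $q_i^*>0$ with $p_i(q_i^* )=0$; and capacities $\overline{q}_{ij}\in(0,\infty)$. The situation has unbounded production, written $(N,M,W,C,P,\infty)$, if $\overline{q}_{ij}=K$ for all $i,j$ with $K$ large enough that the capacities do not affect optimal solutions (e.g. $K\ge\max_{i\in N}q_i^*$, so capacity constraints are implied by $q_{iM}\le q_i^*$). For an order matrix $q=(q_{ij})_{i\in R,j\in M}\ge0$: $q_{Rj}=\sum_{i\in R}q_{ij}$, $q_{iM}=\sum_{j}q_{ij}$, $q_{RS}=\sum_{j\in S}\sum_{i\in R}q_{ij}$, $q_i=(q_{ij})_j$, $q_R=(q_{Rj})_j$; $c_S(x)=\min_{j\in S}c_j(x)$. For $i\in R$: $\Pi_i(q_i,\Psi^S(q_R))=p_i(q_{iM})q_{iM}-\sum_{j\in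 S}c_S(q_{RS})q_{ij}-\sum_{j\in M\setminus S}w_j(q_{Rj})q_{ij}$. $\mathbb{Q}^R=\{q\in\mathbb{R}_+^{R\times M}: q_{iM}\le q_i^*,\ q_{ij}\le\overline{q}_{ij}\}$; $q^{(R,S)}$ is an optimal solution of $\max\{\sum_{i\in R}\Pi_i(q_i,\Psi^S(q_R)):q\in\mathbb{Q}^R\}$. MRS-game: $v(R,S)=\sum_{i\in R}\Pi_i(q_i^{(R,S)},\Psi^S(q_R^{(R,S)}))$ for $\emptyset\ne R\subseteq N$, $S\subseteq M$, $v(\emptyset,S)=0$. A supplier $j\in M$ is optimal if $v(N,M)=v(N,\{j\})$; $M^o$ is the set of optimal suppliers. *)

From HB Require Import structures.
From mathcomp Require Import all_boot all_order all_algebra.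
From mathcomp Require Import all_classical all_reals all_analysis.
Set Implicit Arguments. Unset Strict Implicit. Unset Printing Implicit Defensive.
Import Order.TTheory GRing.Theory Num.Theory numFieldNormedType.Exports.
Local Open Scope classical_set_scope.
Local Open Scope ring_scope.

Section MRS.
Variables (R : realType) (I J : finType).
(* I = retailers N, J = suppliers M (both as finite types; coalitions are
   finite subsets). *)
Variables (c w : J -> R -> R) (p : I -> R -> R) (qstar : I -> R)
          (qbar : I -> J -> R).

(* c_S(x) = min_{j in S} c_j(x)  (only used when S is nonempty) *)
Definition cS (S : {set J}) (x : R) : R :=
  if [pick j in S] is Some j0 then \big[Order.min/c j0 x]_(j in S) c j x
  else 0.

Definition qiM (q : I -> J -> R) (i : I) : R := \sum_j q i j.
Definition qRj (q : I -> J -> R) (Rc : {set I}) (j : J) : R :=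
  \sum_(i in Rc) q i j.
Definition qRS (q : I -> J -> R) (Rc : {set I}) (S : {set J}) : R :=
  \sum_(j in S) \sum_(i in Rc) q i j.

Definition Pi (Rc : {set I}) (S : {set J}) (q : I -> J -> R) (i : I) : R :=
  p i (qiM q i) * qiM q i
  - \sum_(j in S) cS S (qRS q Rc S) * q i j
  - \sum_(j in ~: S) w j (qRj q Rc j) * q i j.

(* Q^R : feasible order matrices for coalition R (entries outside R are
   irrelevant to the objective). *)
Definition feasible (Rc : {set I}) (q : I -> J -> R) : Prop :=
  forall i, i \in Rc ->
    qiM q i <= qstar i /\ forall j, 0 <= q i j /\ q i j <= qbar i j.

Definition total_profit (Rc : {set I}) (S : {set J}) (q : I -> J -> R) : R :=
  \sum_(i in Rc) Pi Rc S q i.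

Definition v (Rc : {set I}) (S : {set J}) : R :=
  if (#|Rc| == 0)%N then 0
  else sup [set total_profit Rc S q | q in feasible Rc].

Definition optimal_suppliers : {set J} :=
  [set j | v [set: I] [set: J] == v [set: I] [set j]].

End MRS.

Definition nonneg {R : realType} : set R := [set x | 0 <= x].

Record MRS_situation {R : realType} {I J : finType}
  (c w : J -> R -> R) (p : I -> R -> R) (qstar : I -> R)
  (qbar : I -> J -> R) : Prop := {
  c_pos : forall j x, 0 <= x -> 0 < c j x;
  c_decr : forall j x y, 0 <= x -> x < y -> c j y < c j x;
  c_cont : forall j, {within (@nonneg R), continuous (c j : R -> R)};
  c_mul_nondecr : forall j x y, 0 <= x -> x <= y -> c j x * x <= c j y * y;
  w_pos : forall j x, 0 <= x -> 0 < w j x;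
  w_nonincr : forall j x y, 0 <= x -> x <= y -> w j y <= w j x;
  w_cont : forall j, {within (@nonneg R), continuous (w j : R -> R)};
  w_gt_c : forall j x, 0 <= x -> c j x < w j x;
  w_mul_nondecr : forall j x y, 0 <= x -> x <= y -> w j x * x <= w j y * y;
  p_nonincr : forall i x y, 0 <= x -> x <= y -> p i y <= p i x;
  p_cont : forall i, {within (@nonneg R), continuous (p i : R -> R)};
  p0_gt_w0 : forall i j, w j 0 < p i 0;
  qstar_pos : forall i, 0 < qstar i;
  p_qstar : forall i, p i (qstar i) = 0;
  qbar_pos : forall i j, 0 < qbar i j
}.

Definition unbounded_production {R : realType} {I J : finType}
  (qstar : I -> R) (qbar : I -> J -> R) (K : R) : Prop :=
  (forall i j, qbar i j = K) /\ (forall i, qstar i <= K).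

From mathcomp Require Import all_boot all_order all_algebra.
From mathcomp Require Import all_classical all_reals all_analysis.
Set Implicit Arguments. Unset Strict Implicit. Unset Printing Implicit Defensive.
Import Order.TTheory GRing.Theory Num.Theory.
Local Open Scope ring_scope.

(* When all suppliers cooperate, every unit is paid at c_M(X), the cheapest
   production cost at the total quantity X.  Any single supplier j charges at
   least that much per unit (its own cost c_j, or a wholesale price w_k > c_k,
   both evaluated at quantities at most X), so v(N,{j}) <= v(N,M).  Conversely,
   if k attains c_M(X), shifting every order to k keeps the profit unchanged
   under the coalition {k}, and the shifted orders are feasible because the
   capacities are unbounded; hence v(N,M) <= max_k v(N,{k}), and a supplier
   maximising v(N,{k}) is optimal. *)

Section MRSGame.
Variables (R : realType) (I J : finType).
Variables (c w : J -> R -> R) (p : I -> R -> R) (qstar : I -> R)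
          (qbar : I -> J -> R).
Hypothesis mrs : MRS_situation c w p qstar qbar.

Lemma c_nonincr j x y : 0 <= x -> x <= y -> c j y <= c j x.
Proof.
move=> x_ge0; rewrite le_eqVlt => /predU1P [-> //|lt_xy].
exact/ltW/(c_decr mrs).
Qed.

Lemma cS_le (S : {set J}) j x : j \in S -> cS c S x <= c j x.
Proof.
move=> jS; rewrite /cS; case: pickP => [j0 _|/(_ j)]; last by rewrite jS.
exact: bigmin_le_cond.
Qed.

Lemma cS_attained (S : {set J}) j x :
  j \in S -> exists2 k, k \in S & cS c S x = c k x.
Proof.
move=> jS; rewrite /cS; case: pickP => [j0 j0S|/(_ j)]; last by rewrite jS.
apply: (big_ind (fun y => exists2 k, k \in S & y = c k x)); first by exists j0.
  by move=> _ _ [a aS ->] [b bS ->]; case: leP => _; [exists a | exists b].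
by move=> k kS; exists k.
Qed.

Lemma cS_set1 j x : cS c [set j] x = c j x.
Proof. by have [k] := cS_attained x (set11 j); rewrite inE => /eqP ->. Qed.

Lemma cS_ge0 (S : {set J}) x : 0 <= x -> 0 <= cS c S x.
Proof.
move=> x_ge0; have [->|[j jS]] := set_0Vmem S.
  by rewrite /cS; case: pickP => [j|//]; rewrite inE.
by have [k _ ->] := cS_attained x jS; exact/ltW/(c_pos mrs).
Qed.

Section Quantities.
Variables (Rc : {set I}) (q : I -> J -> R).
Hypothesis fq : feasible qstar qbar Rc q.

Lemma feasible_ge0 i j : i \in Rc -> 0 <= q i j.
Proof. by case/fq=> _ /(_ j) []. Qed.

Lemma qiM_ge0 i : i \in Rc -> 0 <= qiM q i.
Proof. by move=> iRc; apply: sumr_ge0 => j _; exact: feasible_ge0. Qed.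

Lemma qRj_ge0 j : 0 <= qRj q Rc j.
Proof. by apply: sumr_ge0 => i; exact: feasible_ge0. Qed.

Lemma qRS_ge0 (S : {set J}) : 0 <= qRS q Rc S.
Proof. by apply: sumr_ge0 => j _; exact: qRj_ge0. Qed.

Lemma qRj_le_qRS (S : {set J}) j : j \in S -> qRj q Rc j <= qRS q Rc S.
Proof.
by move=> jS; rewrite /qRS (bigD1 j) //= lerDl; apply: sumr_ge0 => k _; exact: qRj_ge0.
Qed.

Lemma qRS_le_setT (S : {set J}) : qRS q Rc S <= qRS q Rc [set: J].
Proof.
rewrite [leRHS](big_setID S) /= finset.setTI lerDl.
by apply: sumr_ge0 => j _; exact: qRj_ge0.
Qed.

End Quantities.

Lemma feasible_zero Rc : feasible qstar qbar Rc (fun _ _ => 0).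
Proof.
move=> i _; split; first by rewrite /qiM big1 //; exact/ltW/(qstar_pos mrs).
by move=> j; rewrite lexx; split=> //; exact/ltW/(qbar_pos mrs).
Qed.

Definition unit_price (Rc : {set I}) (S : {set J}) (q : I -> J -> R) j : R :=
  if j \in S then cS c S (qRS q Rc S) else w j (qRj q Rc j).

Lemma Pi_unit_price Rc S q i :
  Pi c w p Rc S q i = p i (qiM q i) * qiM q i - \sum_j unit_price Rc S q j * q i j.
Proof.
rewrite /Pi [in RHS](bigID (mem S)) /= opprD addrA; congr (_ - _ - _).
  by apply: eq_bigr => j jS; rewrite /unit_price jS.
apply: eq_big => [j|j]; first by rewrite inE.
by rewrite inE => /negbTE jS; rewrite /unit_price jS.
Qed.

Lemma unit_price_ge0 Rc S q j :
  feasible qstar qbar Rc q -> 0 <= unit_price Rc S q j.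
Proof.
move=> fq; rewrite /unit_price; case: ifP => _.
  exact/cS_ge0/qRS_ge0.
exact/ltW/(w_pos mrs)/qRj_ge0.
Qed.

Lemma unit_price_setT_le Rc S q j :
  feasible qstar qbar Rc q -> unit_price Rc [set: J] q j <= unit_price Rc S q j.
Proof.
move=> fq; rewrite /unit_price finset.in_setT; case: ifP => jS.
  have [k kS ->] := cS_attained (qRS q Rc S) jS.
  apply: le_trans (cS_le _ (finset.in_setT k)) _.
  exact/c_nonincr/qRS_le_setT/fq/qRS_ge0.
apply: le_trans (cS_le _ (finset.in_setT j)) _.
apply: le_trans (c_nonincr j (qRj_ge0 fq j) (qRj_le_qRS fq (finset.in_setT j))) _.
exact/ltW/(w_gt_c mrs)/qRj_ge0.
Qed.

Lemma revenue_le i x : 0 <= x -> x <= qstar i -> p i x * x <= p i 0 * qstar i.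
Proof.
move=> x_ge0 x_le; have p_ge0 : 0 <= p i x.
  by rewrite -(p_qstar mrs i); exact: (p_nonincr mrs).
by apply: ler_pM => //; exact: (p_nonincr mrs).
Qed.

Lemma total_profit_le_revenue Rc S q : feasible qstar qbar Rc q ->
  total_profit c w p Rc S q <= \sum_(i in Rc) p i 0 * qstar i.
Proof.
move=> fq; apply: ler_sum => i iRc; have [qiM_le _] := fq i iRc.
rewrite Pi_unit_price; apply: le_trans (revenue_le (qiM_ge0 fq iRc) qiM_le).
by rewrite gerBl sumr_ge0 // => j _; rewrite mulr_ge0 ?unit_price_ge0 ?(feasible_ge0 fq).
Qed.

Lemma total_profit_le_setT Rc S q : feasible qstar qbar Rc q ->
  total_profit c w p Rc S q <= total_profit c w p Rc [set: J] q.
Proof.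
move=> fq; apply: ler_sum => i iRc; rewrite !Pi_unit_price lerB // ler_sum // => j _.
by rewrite ler_wpM2r ?(feasible_ge0 fq) ?unit_price_setT_le.
Qed.

Lemma total_profit_le_v Rc S q : feasible qstar qbar Rc q ->
  total_profit c w p Rc S q <= v c w p qstar qbar Rc S.
Proof.
move=> fq; rewrite /v; case: eqP => [/eqP|_].
  by rewrite cards_eq0 => /eqP ->; rewrite /total_profit big_set0.
apply: ub_le_sup; last by exists q.
by exists (\sum_(i in Rc) p i 0 * qstar i) => _ [q' fq' <-]; exact: total_profit_le_revenue.
Qed.

Lemma v_le Rc S m :
  (forall q, feasible qstar qbar Rc q -> total_profit c w p Rc S q <= m) ->
  v c w p qstar qbar Rc S <= m.
Proof.
move=> profit_le; rewrite /v; case: eqP => [/eqP|_].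
  rewrite cards_eq0 => /eqP Rc0; have := profit_le _ (@feasible_zero Rc).
  by rewrite /total_profit Rc0 big_set0.
apply: ge_sup => [|_ [q fq <-]]; last exact: profit_le.
by exists (total_profit c w p Rc S (fun _ _ => 0)), (fun _ _ => 0); first exact: feasible_zero.
Qed.

Lemma v_le_setT Rc S : v c w p qstar qbar Rc S <= v c w p qstar qbar Rc [set: J].
Proof.
apply: v_le => q fq.
exact: le_trans (total_profit_le_setT S fq) (total_profit_le_v _ fq).
Qed.

Definition reroute (q : I -> J -> R) (k : J) : I -> J -> R :=
  fun i j => if j == k then qiM q i else 0.

Lemma qiM_reroute q k i : qiM (reroute q k) i = qiM q i.
Proof.
by rewrite /qiM (bigD1 k) //= /reroute eqxx big1 ?addr0 // => j /negbTE ->.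
Qed.

Lemma qRS_reroute q k Rc : qRS (reroute q k) Rc [set k] = qRS q Rc [set: J].
Proof.
rewrite /qRS big_set1 exchange_big /=; apply: eq_bigr => i _.
by rewrite /reroute eqxx /qiM; apply: eq_bigl => j; rewrite finset.in_setT.
Qed.

Lemma feasible_reroute Rc q k : (forall i, qstar i <= qbar i k) ->
  feasible qstar qbar Rc q -> feasible qstar qbar Rc (reroute q k).
Proof.
move=> qstar_le fq i iRc; have [qiM_le _] := fq i iRc.
rewrite qiM_reroute; split=> // j; rewrite /reroute.
case: eqP => [->|_]; split.
- apply: (qiM_ge0 fq iRc).
- exact: le_trans qiM_le (qstar_le i).
- exact: lexx.
- exact/ltW/(qbar_pos mrs).
Qed.

Lemma total_profit_reroute Rc q k :
  cS c [set: J] (qRS q Rc [set: J]) = c k (qRS q Rc [set: J]) ->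
  total_profit c w p Rc [set k] (reroute q k) = total_profit c w p Rc [set: J] q.
Proof.
move=> k_cheapest; apply: eq_bigr => i _; rewrite !Pi_unit_price qiM_reroute.
congr (_ - _); rewrite (bigD1 k) //= big1 ?addr0; last first.
  by move=> j /negbTE jk; rewrite /reroute jk mulr0.
rewrite /unit_price set11 cS_set1 qRS_reroute /reroute eqxx -k_cheapest.
by rewrite /qiM mulr_sumr; apply: eq_bigr => j _; rewrite finset.in_setT.
Qed.

Lemma v_setT_le Rc (j0 : J) m : (forall i k, qstar i <= qbar i k) ->
  (forall k, v c w p qstar qbar Rc [set k] <= m) ->
  v c w p qstar qbar Rc [set: J] <= m.
Proof.
move=> qstar_le v1_le; apply: v_le => q fq.
have [k _ k_cheapest] := cS_attained (qRS q Rc [set: J]) (finset.in_setT j0).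
rewrite -(total_profit_reroute k_cheapest); apply: le_trans (v1_le k).
exact/total_profit_le_v/feasible_reroute.
Qed.

End MRSGame.

Theorem lemma3 (R : realType) (I J : finType)
  (c w : J -> R -> R) (p : I -> R -> R) (qstar : I -> R)
  (qbar : I -> J -> R) (K : R) :
  MRS_situation c w p qstar qbar ->
  unbounded_production qstar qbar K ->
  (0 < #|J|)%N ->
  (1 <= #|optimal_suppliers c w p qstar qbar|)%N.
Proof.
move=> mrs [qbarK qstar_leK] /card_gt0P [j0 _].
have qstar_le_qbar i k : qstar i <= qbar i k by rewrite qbarK qstar_leK.
pose v1 k := v c w p qstar qbar [set: I] [set k].
have [jm _ jm_max] := @arg_maxP _ _ J j0 xpredT v1 isT.
apply/card_gt0P; exists jm; rewrite inE; apply/eqP/le_anti.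
rewrite v_le_setT // andbT; apply: v_setT_le => // k.
exact: jm_max.
Qed.
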